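(* Let $\mathfrak g$ be a pre-Lie algebra and $r_1,r_2\in\mathrm{Sym}^2(\mathfrak g)$ two $\mathfrak s$-matrices. If $(\phi,\varphi)$ is a weak homomorphism from $r_2$ to $r_1$, then $(\phi,\varphi)$ is a weak homomorphism from the phase space $(\mathfrak g^c,\mathfrak g^{*c},\omega_p,r_2)$ to the phase space $(\mathfrak g^c,\mathfrak g^{*c},\omega_p,r_1)$; that is, $\varphi^*:(\mathfrak g^*,[\cdot,\cdot]_{r_2})\to(\mathfrak g^*,[\cdot,\cdot]_{r_1})$ is a Lie algebra homomorphism and $\phi+\varphi^*:(\mathfrak g\oplus\mathfrak g^*,[\cdot,\cdot]_{p,r_2})\to(\mathfrak g\oplus\mathfrak g^*,[\cdot,\cdot]_{p,r_1})$ is a Lie algebra homomorphism.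
   Context: A pre-Lie algebra is a finite-dimensional vector space $\mathfrak g$ over a field of characteristic $0$ with product $\cdot$ satisfying $(x\cdot y)\cdot z-x\cdot(y\cdot z)=(y\cdot x)\cdot z-y\cdot(x\cdot z)$; $\mathfrak g^c$ has bracket $[x,y]_{\mathfrak g}=x\cdot y-y\cdot x$. Define $\langle L^*_x\alpha,y\rangle=-\langle\alpha,x\cdot y\rangle$, $\langle R^*_x\alpha,y\rangle=-\langle\alpha,y\cdot x\rangle$, $\mathrm{ad}^*_x=L^*_x-R^*_x$. For $r\in\mathrm{Sym}^2(\mathfrak g)$, $\langle r^\sharp(\alpha),\beta\rangle=r(\alpha,\beta)$; for $r=\sum_ia_i\otimes b_i$, $[r,r]=-\sum a_i\cdot a_j\otimes b_i\otimes b_j+\sum a_i\otimes b_i\cdot a_j\otimes b_j+\sum a_i\otimes a_j\otimes[b_i,b_j]_{\mathfrak g}$; $r$ is an $\mathfrak s$-matrix if $[r,r]=0$. Set $\alpha\cdot_r\beta=\mathrm{ad}^*_{r^\sharp(\alpha)}\beta-R^*_{r^\sharp(\beta)}\alpha$, $[\alpha,\beta]_r=L^*_{r^\sharp(\alpha)}\beta-L^*_{r^\sharp(\beta)}\alpha$, and for $\alpha\in\mathfrak g^*$ define $L^*_\alpha:\mathfrak g\to\mathfrak g$ by $\langle L^*_\alpha x,\beta\rangle=-\langle x,\alpha\cdot_r\beta\rangle$. The phase space $(\mathfrak g^c,\mathfrak g^{*c},\omega_p,r)$ associated to $r$ is $\mathfrak g\oplus\mathfrak g^*$ with the Lie bracket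 $[x+\alpha,y+\beta]_{p,r}=[\alpha,\beta]_r+L^*_x\beta-L^*_y\alpha+L^*_\alpha y-L^*_\beta x+[x,y]_{\mathfrak g}$ and the form $\omega_p(x+\alpha,y+\beta)=\langle\alpha,y\rangle-\langle x,\beta\rangle$. A weak homomorphism from $\mathfrak s$-matrix $r_2$ to $\mathfrak s$-matrix $r_1$ is a pair $(\phi,\varphi)$ with $\phi:\mathfrak g^c\to\mathfrak g^c$ a Lie algebra homomorphism and $\varphi:\mathfrak g\to\mathfrak g$ linear, such that $(\varphi\otimes\mathrm{Id})r_1=(\mathrm{Id}\otimes\phi)r_2$ and $\varphi(\phi(x)\cdot y)=x\cdot\varphi(y)$ for all $x,y\in\mathfrak g$. *)

(* A finite-dimensional vector space g over a field F is
   modelled as 'rV[F]_n with standard basis e i; its dual g^* is modelled as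
   'rV[F]_n with the coordinate pairing <alpha, x> = sum_i alpha_i x_i. *)
From HB Require Import structures.
From mathcomp Require Import all_boot all_order all_algebra.
Set Implicit Arguments. Unset Strict Implicit. Unset Printing Implicit Defensive.
Import Order.TTheory GRing.Theory Num.Theory.
Local Open Scope ring_scope.

Section PreLie.
Variables (F : fieldType) (n : nat).
Local Notation V := 'rV[F]_n.

(* standard basis vector (of g, and also the dual basis of g^* ) *)
Definition e (i : 'I_n) : V := delta_mx 0 i.

Definition pair (alpha x : V) : F := \sum_(i < n) alpha 0 i * x 0 i.

Definition bilinear_op (mul : V -> V -> V) : Prop :=
  (forall (a : F) x y z, mul (a *: x + y) z = a *: mul x z + mul y z) /\
  (forall (a : F) x y z, mul x (a *: y + z) = a *: mul x y + mul x z).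

Definition preLie_axiom (mul : V -> V -> V) : Prop :=
  forall x y z, mul (mul x y) z - mul x (mul y z) = mul (mul y x) z - mul y (mul x z).

Definition preLie (mul : V -> V -> V) : Prop := bilinear_op mul /\ preLie_axiom mul.

Definition brk (mul : V -> V -> V) (x y : V) : V := mul x y - mul y x.

Definition Lst (mul : V -> V -> V) (x alpha : V) : V :=
  \row_j (- pair alpha (mul x (e j))).
Definition Rst (mul : V -> V -> V) (x alpha : V) : V :=
  \row_j (- pair alpha (mul (e j) x)).
Definition adst (mul : V -> V -> V) (x alpha : V) : V := Lst mul x alpha - Rst mul x alpha.

(* r in Sym^2(g) is encoded by its coefficient matrix: r = sum_{i,j} r i j e_i (x) e_j *)
Definition sym2 (r : 'M[F]_n) : Prop := r^T = r.

(* <r^#(alpha), beta> = r(alpha, beta) = sum_{i,j} r_ij alpha_i beta_j *)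
Definition rsharp (r : 'M[F]_n) (alpha : V) : V := alpha *m r.

(* coefficient (p,q,s) of [r,r] in g (x) g (x) g, computed from the
   decomposition r = sum_{i,j} r_ij e_i (x) e_j *)
Definition rr (mul : V -> V -> V) (r : 'M[F]_n) (p q s : 'I_n) : F :=
  - (\sum_(i < n) \sum_(j < n) \sum_(k < n) \sum_(l < n)
       r i j * r k l * (mul (e i) (e k)) 0 p * (j == q)%:R * (l == s)%:R)
  + (\sum_(i < n) \sum_(j < n) \sum_(k < n) \sum_(l < n)
       r i j * r k l * (i == p)%:R * (mul (e j) (e k)) 0 q * (l == s)%:R)
  + (\sum_(i < n) \sum_(j < n) \sum_(k < n) \sum_(l < n)
       r i j * r k l * (i == p)%:R * (k == q)%:R * (brk mul (e j) (e l)) 0 s).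

Definition s_matrix (mul : V -> V -> V) (r : 'M[F]_n) : Prop :=
  forall p q s, rr mul r p q s = 0.

Definition dotr (mul : V -> V -> V) (r : 'M[F]_n) (alpha beta : V) : V :=
  adst mul (rsharp r alpha) beta - Rst mul (rsharp r beta) alpha.

Definition brr (mul : V -> V -> V) (r : 'M[F]_n) (alpha beta : V) : V :=
  Lst mul (rsharp r alpha) beta - Lst mul (rsharp r beta) alpha.

Definition Lstd (mul : V -> V -> V) (r : 'M[F]_n) (alpha x : V) : V :=
  \row_j (- pair (dotr mul r alpha (e j)) x).

Definition brp (mul : V -> V -> V) (r : 'M[F]_n) (u v : V * V) : V * V :=
  let: (x, alpha) := u in let: (y, beta) := v in
  (Lstd mul r alpha y - Lstd mul r beta x + brk mul x y,
   brr mul r alpha beta + Lst mul x beta - Lst mul y alpha).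

Definition dualmap (f : V -> V) (alpha : V) : V := \row_j pair alpha (f (e j)).

(* coefficient matrix of (f (x) g) r *)
Definition tmap (f g : V -> V) (r : 'M[F]_n) : 'M[F]_n :=
  \matrix_(p, q) \sum_(i < n) \sum_(j < n) r i j * (f (e i)) 0 p * (g (e j)) 0 q.

Definition lie_hom (mul : V -> V -> V) (phi : {linear V -> V}) : Prop :=
  forall x y, phi (brk mul x y) = brk mul (phi x) (phi y).

Definition weak_hom (mul : V -> V -> V) (r2 r1 : 'M[F]_n)
    (phi varphi : {linear V -> V}) : Prop :=
  [/\ lie_hom mul phi,
      tmap varphi id r1 = tmap id phi r2 &
      forall x y, varphi (mul (phi x) y) = mul x (varphi y)].

End PreLie.

(* Everything is dual to the two compatibility conditions of a weak
   homomorphism. The tensor condition (varphi (x) Id) r1 = (Id (x) phi) r2 says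
   r1^# o varphi^* = phi o r2^#, and by symmetry of r1, r2 also
   r2^# o phi^* = varphi o r1^#. The condition varphi (phi x . y) = x . varphi y
   says varphi^* o L^*_x = L^*_{phi x} o varphi^*. Pairing against test vectors,
   each component of the phase space bracket is transported by phi + varphi^*. *)
From HB Require Import structures.
From mathcomp Require Import all_boot all_order all_algebra.
From mathcomp Require Import ring.
Set Implicit Arguments. Unset Strict Implicit.
Import GRing.Theory.
Local Open Scope ring_scope.

Section Pairing.
Variables (F : fieldType) (n : nat).
Local Notation V := 'rV[F]_n.

Lemma pairC (u x : V) : pair u x = pair x u.
Proof. by apply: eq_bigr => i _; rewrite mulrC. Qed.

Lemma pairDl (u v x : V) : pair (u + v) x = pair u x + pair v x.
Proof. by rewrite /pair -big_split; apply: eq_bigr => i _; rewrite mxE mulrDl. Qed.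

Lemma pairZl (a : F) (u x : V) : pair (a *: u) x = a * pair u x.
Proof. by rewrite /pair mulr_sumr; apply: eq_bigr => i _; rewrite mxE mulrA. Qed.

Lemma pairNl (u x : V) : pair (- u) x = - pair u x.
Proof. by rewrite -scaleN1r pairZl mulN1r. Qed.

Lemma pairBl (u v x : V) : pair (u - v) x = pair u x - pair v x.
Proof. by rewrite pairDl pairNl. Qed.

Lemma pairDr (u v x : V) : pair x (u + v) = pair x u + pair x v.
Proof. by rewrite !(pairC x) pairDl. Qed.

Lemma pairZr (a : F) (u x : V) : pair x (a *: u) = a * pair x u.
Proof. by rewrite !(pairC x) pairZl. Qed.

Lemma pairBr (u v x : V) : pair x (u - v) = pair x u - pair x v.
Proof. by rewrite !(pairC x) pairBl. Qed.

Lemma pair_e (a : V) j : pair a (e F j) = a 0 j.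
Proof.
rewrite /pair (bigD1 j) //= big1 ?addr0; first by rewrite mxE !eqxx mulr1.
by move=> i /negbTE neq_ij; rewrite mxE neq_ij andbF mulr0.
Qed.

Lemma pair_inj (u v : V) : (forall y, pair u y = pair v y) -> u = v.
Proof. by move=> eq_uv; apply/rowP => j; have := eq_uv (e F j); rewrite !pair_e. Qed.

(* L^*_x, R^*_x, L^*_alpha and f^* are all defined as such rows of values. *)
Lemma pair_row_lfun (g : V -> F) :
  (forall a u v, g (a *: u + v) = a * g u + g v) ->
  forall y, pair (\row_j g (e F j)) y = g y.
Proof.
move=> g_lin y.
have g0 : g 0 = 0.
  have := g_lin 1 0 0; rewrite scaler0 addr0 mul1r => g00.
  by apply: (@addrI _ (g 0)); rewrite addr0 -g00.
rewrite pairC /pair; under eq_bigr do rewrite mxE.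
rewrite [in RHS](row_sum_delta y).
apply: (big_rec2 (fun c b => c = g b)) => // i c b _ ->.
by rewrite g_lin.
Qed.

Lemma pair_dualmap (f : {linear V -> V}) a y :
  pair (dualmap f a) y = pair a (f y).
Proof.
rewrite /dualmap; apply: (pair_row_lfun (g := fun y => pair a (f y))) => c u v.
by rewrite linearD linearZ pairDr pairZr.
Qed.

Lemma dualmapD (f : {linear V -> V}) u v :
  dualmap f (u + v) = dualmap f u + dualmap f v.
Proof. by apply: pair_inj => y; rewrite pairDl !pair_dualmap pairDl. Qed.

Lemma dualmapN (f : {linear V -> V}) u : dualmap f (- u) = - dualmap f u.
Proof. by apply: pair_inj => y; rewrite pairNl !pair_dualmap pairNl. Qed.

Lemma dualmap_mx (f : {linear V -> V}) a : dualmap f a = a *m (lin1_mx f)^T.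
Proof. by apply/rowP => j; rewrite !mxE; apply: eq_bigr => i _; rewrite !mxE. Qed.

Lemma tmap_mx (f g : V -> V) r : tmap f g r = (lin1_mx f)^T *m r *m lin1_mx g.
Proof.
apply/matrixP => p q; rewrite !mxE.
under [RHS]eq_bigr do rewrite !mxE big_distrl /=.
rewrite exchange_big /=; apply: eq_bigr => i _; apply: eq_bigr => j _.
by rewrite !mxE; ring.
Qed.

Lemma lin1_mx_id : lin1_mx (@id V) = 1%:M.
Proof. by apply/matrixP => i j; rewrite !mxE eqxx eq_sym. Qed.

Lemma rsharpD (r : 'M[F]_n) a u v :
  rsharp r (a *: u + v) = a *: rsharp r u + rsharp r v.
Proof. by rewrite /rsharp mulmxDl scalemxAl. Qed.

End Pairing.

Section DualOperators.
Variables (F : fieldType) (n : nat) (mul : 'rV[F]_n -> 'rV[F]_n -> 'rV[F]_n).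
Hypothesis mul_bilin : bilinear_op mul.

Lemma pair_Lst x b y : pair (Lst mul x b) y = - pair b (mul x y).
Proof.
rewrite /Lst; apply: (pair_row_lfun (g := fun y => - pair b (mul x y))) => a u v.
by rewrite mul_bilin.2 pairDr pairZr; ring.
Qed.

Lemma pair_Rst x b y : pair (Rst mul x b) y = - pair b (mul y x).
Proof.
rewrite /Rst; apply: (pair_row_lfun (g := fun y => - pair b (mul y x))) => a u v.
by rewrite mul_bilin.1 pairDr pairZr; ring.
Qed.

Lemma pair_dotr r a b z :
  pair (dotr mul r a b) z
  = - pair b (brk mul (rsharp r a) z) + pair a (mul z (rsharp r b)).
Proof. by rewrite !pairBl pair_Lst pair_Rst pair_Rst /brk pairBr; ring. Qed.

Lemma pair_Lstd r a x b : pair (Lstd mul r a x) b = - pair (dotr mul r a b) x.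
Proof.
rewrite /Lstd; apply: (pair_row_lfun (g := fun b => - pair (dotr mul r a b) x)) => c u v.
rewrite !pair_dotr rsharpD mul_bilin.2 pairDl pairZl.
by rewrite (pairDr _ _ a) (pairZr _ _ a); ring.
Qed.

End DualOperators.

Section WeakHomomorphism.
Variables (F : fieldType) (n : nat) (mul : 'rV[F]_n -> 'rV[F]_n -> 'rV[F]_n).
Variables (r1 r2 : 'M[F]_n) (phi varphi : {linear 'rV[F]_n -> 'rV[F]_n}).
Hypothesis mul_bilin : bilinear_op mul.
Hypotheses (r1_sym : sym2 r1) (r2_sym : sym2 r2).
Hypothesis phi_lie : lie_hom mul phi.
Hypothesis tmap_weak : tmap varphi id r1 = tmap id phi r2.
Hypothesis varphi_mulE : forall x y, varphi (mul (phi x) y) = mul x (varphi y).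

Let lin1_weak : (lin1_mx varphi)^T *m r1 = r2 *m lin1_mx phi.
Proof. by move: tmap_weak; rewrite !tmap_mx lin1_mx_id trmx1 mulmx1 mul1mx. Qed.

Lemma rsharp_dualmap_varphi a : rsharp r1 (dualmap varphi a) = phi (rsharp r2 a).
Proof. by rewrite dualmap_mx /rsharp -mul_rV_lin1 -!mulmxA lin1_weak. Qed.

Lemma rsharp_dualmap_phi b : rsharp r2 (dualmap phi b) = varphi (rsharp r1 b).
Proof.
have lin1_weakT : (lin1_mx phi)^T *m r2 = r1 *m lin1_mx varphi.
  by rewrite -{1}r2_sym -{1}r1_sym -!trmx_mul -lin1_weak trmx_mul trmxK.
by rewrite dualmap_mx /rsharp -mul_rV_lin1 -!mulmxA lin1_weakT.
Qed.

Lemma dualmap_Lst x b :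
  dualmap varphi (Lst mul x b) = Lst mul (phi x) (dualmap varphi b).
Proof.
by apply: pair_inj => z; rewrite pair_dualmap !pair_Lst // pair_dualmap varphi_mulE.
Qed.

Lemma dualmap_brr a b :
  dualmap varphi (brr mul r2 a b)
  = brr mul r1 (dualmap varphi a) (dualmap varphi b).
Proof.
by rewrite /brr dualmapD dualmapN !dualmap_Lst !rsharp_dualmap_varphi.
Qed.

Lemma phi_Lstd a y :
  phi (Lstd mul r2 a y) = Lstd mul r1 (dualmap varphi a) (phi y).
Proof.
apply: pair_inj => b.
rewrite (pairC (phi _)) -pair_dualmap pairC !pair_Lstd // !pair_dotr //.
by rewrite rsharp_dualmap_varphi rsharp_dualmap_phi -phi_lie !pair_dualmap varphi_mulE.
Qed.

End WeakHomomorphism.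

Theorem proposition5p6 (F : fieldType) (n : nat)
  (charF : [pchar F] =i pred0)
  (mul : 'rV[F]_n -> 'rV[F]_n -> 'rV[F]_n) (HpL : preLie mul)
  (r1 r2 : 'M[F]_n) (Hs1 : sym2 r1) (Hs2 : sym2 r2)
  (Hr1 : s_matrix mul r1) (Hr2 : s_matrix mul r2)
  (phi varphi : {linear 'rV[F]_n -> 'rV[F]_n})
  (Hw : weak_hom mul r2 r1 phi varphi) :
  (forall alpha beta : 'rV[F]_n,
      dualmap varphi (brr mul r2 alpha beta)
      = brr mul r1 (dualmap varphi alpha) (dualmap varphi beta)) /\
  (forall u v : 'rV[F]_n * 'rV[F]_n,
      let hom := fun w : 'rV[F]_n * 'rV[F]_n => (phi w.1, dualmap varphi w.2) in
      hom (brp mul r2 u v) = brp mul r1 (hom u) (hom v)).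
Proof.
case: HpL => mul_bilin _; case: Hw => phi_lie tmap_weak varphi_mulE.
have brr_hom := dualmap_brr mul_bilin tmap_weak varphi_mulE.
split=> // -[x a] [y b] /=; congr (_, _).
- rewrite linearD linearB phi_lie.
  by rewrite !(phi_Lstd mul_bilin Hs1 Hs2 phi_lie tmap_weak varphi_mulE).
- by rewrite dualmapD dualmapN dualmapD brr_hom !(dualmap_Lst mul_bilin varphi_mulE).
Qed.
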